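(* (i) If $d$ is large enough, then for every $i\in\{1,\dots,k+1\}$ and every $y\in C_{i-1}$, $D_i(y)\subset B(y,r_i)\cap C_i$. (ii) For $d$ large enough: let $x_0\in D_0$; if there exist $X_1,\dots,X_k\in\chi_1$ and $X_{k+1}\in\chi_\rho$ such that $X_1\in D_1(x_0)$ and $X_i\in D_i(X_{i-1})$ for $2\le i\le k+1$, then the event $\mathcal G^+(x_0)$ occurs.
   Context: Fix $\rho>1$, an integer $k\ge1$, $\kappa\in(\kappa^c_\rho(k),1)$, and $(a_i)_{2\le i\le k+1}\in(0,1)^k$ satisfying $1<\kappa^{k+1}\frac{(1+\rho)^2}{4\rho}\sqrt{\prod_{2\le j\le k+1}(1-a_j^2)}<\kappa\frac{d_{k+1}}{2\rho}$, where $r_1=r_{k+1}=1+\rho$, $r_i=2$ for $2\le i\le k$, $d_1=1+\rho$, $d_i^2=d_{i-1}^2+2r_ia_id_{i-1}+r_i^2$ ($d_i>0$), and $\kappa^c_\rho(k)=\inf_{0\le a_i<1}\max\big((4\rho/((1+\rho)^2\sqrt{\prod_{2\le i\le k+1}(1-a_i^2)}))^{1/(k+1)},\,2\rho/d_{k+1}\big)$. For $d\ge3$ let $v_d$ be the volume of the unit ball of $\mathbb{R}^d$, $B(y,r)$ the open ball in $\mathbb{R}^d$, $B''(c,r)$ the open ball in $\mathbb{R}^{d-2}$, and write $x=(x',x'')\in\mathbb{R}^2\times\mathbb{R}^{d-2}$. Let $\chi_1,\chi_\rho$ be independent homogeneous Poisson point processes on $\mathbb{R}^d$ with intensities $\kappa^d/(v_d2^d)$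 and $\kappa^d/(v_d2^d\rho^d)$. Sets: $D'_0=(-d^{-1/2},d^{-1/2})\times(-d^{-1/2},0)$, $D'_i=(0,d^{-1/2})^2$ for $1\le i\le k+1$; $C''_0=\{0\}$, $C''_i=B''(0,d_i-2d^{-1})\setminus B''(0,d_i-3d^{-1})$ for $1\le i\le k+1$; $C_i=D'_i\times C''_i$. For $2\le i\le k+1$ and $d$ large, $\theta_i\in(0,\pi/2)$ is defined by $\cos\theta_i=\frac{d_{i-1}+a_ir_i}{d_i}+d^{-1/2}$. For $y\in C_{i-1}$: $D''_i(y'')=\{z''\in C''_i:\langle z'',y''\rangle\ge\|y''\|\|z''\|\cos\theta_i\}$ for $2\le i\le k+1$, $D''_1(y'')=C''_1$, and $D_i(y)=D'_i\times D''_i(y'')$; $D_0=D'_0\times C''_0$. Event: with $W^+=d^{-1/2}((0,1)\times(0,1)\times\mathbb{R}^{d-2})$, for $x_0\in D_0$, $\mathcal G^+(x_0)$ is the event that there exist distinct $x_1,\dots,x_k\in\chi_1\cap W^+$ and $x_{k+1}\in\chi_\rho\cap W^+$ with $\|x_1-x_0\|<1+\rho$, $\|x_{i+1}-x_i\|<2$ for $1\le i\le k-1$, and $\|x_{k+1}-x_k\|<1+\rho$. *)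

From HB Require Import structures.
From mathcomp Require Import all_boot all_order all_algebra.
From mathcomp Require Import all_classical all_reals all_analysis.
Set Implicit Arguments. Unset Strict Implicit. Unset Printing Implicit Defensive.
Import Order.TTheory GRing.Theory Num.Theory.
Local Open Scope ring_scope.

Definition enorm (R : realType) (d : nat) (x : 'I_d -> R) : R :=
  Num.sqrt (\sum_(i < d) x i ^+ 2).
Definition edist (R : realType) (d : nat) (x y : 'I_d -> R) : R :=
  enorm (fun i => x i - y i).

(* x = (x', x'') in R^2 x R^{d-2}: x' = coordinates 0,1 ; x'' = coordinates 2..d-1 *)
Definition tnorm (R : realType) (d : nat) (x : 'I_d -> R) : R :=
  Num.sqrt (\sum_(i < d | (2 <= i)%N) x i ^+ 2).
Definition tdot (R : realType) (d : nat) (x y : 'I_d -> R) : R :=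
  \sum_(i < d | (2 <= i)%N) x i * y i.

Definition isq (R : realType) (d : nat) : R := (Num.sqrt (d%:R))^-1.

Definition rr (R : realType) (rho : R) (k i : nat) : R :=
  if (i == 1)%N || (i == k.+1)%N then 1 + rho else 2.

(* d_1 = 1 + rho, d_i = sqrt(d_{i-1}^2 + 2 r_i a_i d_{i-1} + r_i^2) for i >= 2;
   d_0 is never used (set to 0). a is indexed by 2..k+1. *)
Fixpoint dd (R : realType) (rho : R) (k : nat) (a : nat -> R) (n : nat) : R :=
  match n with
  | 0 => 0
  | S m =>
    match m with
    | 0 => 1 + rho
    | S _ => let p := dd rho k a m in
             Num.sqrt (p ^+ 2 + 2 * rr rho k n * a n * p + rr rho k n ^+ 2)
    end
  end.

Definition kappac (R : realType) (rho : R) (k : nat) : R :=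
  inf [set m : R | exists a : nat -> R,
         (forall i : nat, (2 <= i <= k.+1)%N -> 0 <= a i < 1) /\
         m = Num.max
               ((4 * rho / ((1 + rho) ^+ 2 *
                   Num.sqrt (\prod_(2 <= j < k.+2) (1 - a j ^+ 2)))) `^ ((k.+1)%:R^-1))
               (2 * rho / dd rho k a k.+1)].

Definition Dp0 (R : realType) (d : nat) (x : 'I_d -> R) : Prop :=
  forall i : 'I_d,
    ((val i = 0)%N -> - @isq R d < x i < @isq R d) /\
    ((val i = 1)%N -> - @isq R d < x i < 0).

Definition Dpos (R : realType) (d : nat) (x : 'I_d -> R) : Prop :=
  forall i : 'I_d, (val i = 0 \/ val i = 1)%N -> 0 < x i < @isq R d.

Definition Wplus (R : realType) (d : nat) (x : 'I_d -> R) : Prop :=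
  forall i : 'I_d, (val i = 0 \/ val i = 1)%N -> 0 < (@isq R d)^-1 * x i < 1.

Definition Csec0 (R : realType) (d : nat) (x : 'I_d -> R) : Prop :=
  forall i : 'I_d, (2 <= i)%N -> x i = 0.

Definition Csec (R : realType) (rho : R) (k : nat) (a : nat -> R) (d : nat)
    (i : nat) (x : 'I_d -> R) : Prop :=
  tnorm x < dd rho k a i - 2 / d%:R /\ ~ (tnorm x < dd rho k a i - 3 / d%:R).

Definition Cset (R : realType) (rho : R) (k : nat) (a : nat -> R) (d : nat)
    (i : nat) (x : 'I_d -> R) : Prop :=
  if i == 0%N then Dp0 x /\ Csec0 x else Dpos x /\ Csec rho k a i x.

Definition costheta (R : realType) (rho : R) (k : nat) (a : nat -> R) (d i : nat) : R :=
  (dd rho k a i.-1 + a i * rr rho k i) / dd rho k a i + @isq R d.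

Definition Dsec (R : realType) (rho : R) (k : nat) (a : nat -> R) (d : nat)
    (i : nat) (y z : 'I_d -> R) : Prop :=
  if i == 1%N then Csec rho k a 1 z
  else Csec rho k a i z /\ tnorm y * tnorm z * costheta rho k a d i <= tdot z y.

Definition Dset (R : realType) (rho : R) (k : nat) (a : nat -> R) (d : nat)
    (i : nat) (y z : 'I_d -> R) : Prop :=
  Dpos z /\ Dsec rho k a i y z.

Definition D0 (R : realType) (d : nat) (x : 'I_d -> R) : Prop := Dp0 x /\ Csec0 x.

Definition ball_d (R : realType) (d : nat) (y : 'I_d -> R) (r : R) (z : 'I_d -> R) : Prop :=
  edist z y < r.

(* the event G^+(x0), for a realization chi1, chirho of the two point processes *)
Definition Gplus (R : realType) (rho : R) (k d : nat)
    (chi1 chirho : set ('I_d -> R)) (x0 : 'I_d -> R) : Prop :=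
  exists x : nat -> 'I_d -> R,
    (forall i, (1 <= i <= k)%N -> chi1 (x i) /\ Wplus (x i)) /\
    (forall i j, (1 <= i <= k)%N -> (1 <= j <= k)%N -> i <> j -> x i <> x j) /\
    chirho (x k.+1) /\ Wplus (x k.+1) /\
    edist (x 1%N) x0 < 1 + rho /\
    (forall i, (1 <= i <= k.-1)%N -> edist (x i.+1) (x i) < 2) /\
    edist (x k.+1) (x k) < 1 + rho.

From Pilot Require Import Defs.
From HB Require Import structures.
From mathcomp Require Import all_boot all_order all_algebra.
From mathcomp Require Import all_classical all_reals all_analysis.
From mathcomp Require Import ring lra.
Set Implicit Arguments. Unset Strict Implicit.
Import Order.TTheory GRing.Theory Num.Theory.
Local Open Scope ring_scope.
Local Open Scope classical_set_scope.

(* Write s = d^(-1/2): the shells C''_i have thickness s^2 and the planar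
   coordinates x' range over squares of side s.  For z in D_i(y), |z - y|^2 is
   the planar part (less than 8 s^2) plus |z''|^2 + |y''|^2 - 2 <z'', y''>.
   Since |y''| ~ d_(i-1), |z''| ~ d_i and the angle between y'' and z'' has
   cosine at least (d_(i-1) + a_i r_i) / d_i + s, the law of cosines together
   with d_i^2 = d_(i-1)^2 + 2 r_i a_i d_(i-1) + r_i^2 bounds the transverse
   part by r_i^2 - 2 d_(i-1) d_i s + O(s^2); the gain of order s absorbs every
   O(s^2) error once d is large.  For i = 1, y'' = 0 and the shell radius
   d_1 - 2 s^2 < 1 + rho suffices.  In (ii) the points X_i then form a chain
   with consecutive distances below r_i, they lie in W^+ because D'_i does,
   and they are distinct because the radii d_i of the shells increase. *)

Lemma near_oo_exists (P : nat -> Prop) :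
  (\forall n \near \oo, P n) -> exists n0, forall n, (n0 <= n)%N -> P n.
Proof. by move=> [n0 _ Pn]; exists n0. Qed.

Lemma near_forall_range T (F : set_system T) {FF : Filter F} (m n : nat)
    (P : nat -> T -> Prop) :
  (forall i, (m <= i <= n)%N -> \forall x \near F, P i x) ->
  \forall x \near F, forall i, (m <= i <= n)%N -> P i x.
Proof.
move=> FP.
have FPo (i : 'I_n.+1) : \forall x \near F, (m <= i)%N -> P i x.
  case: (leqP m i) => [le_mi|_]; last exact: nearW.
  apply: filterS (FP i _) => [x Px _ //|]; by rewrite le_mi -ltnS ltn_ord.
apply: filterS (filter_forall FF FPo) => x Px i /andP[le_mi le_in].
exact: (Px (Ordinal (le_in : (i < n.+1)%N)) le_mi).
Qed.

Lemma isq_ge0 (R : realType) d : 0 <= isq R d.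
Proof. by rewrite invr_ge0 sqrtr_ge0. Qed.

Lemma isq_gt0 (R : realType) d : (1 <= d)%N -> 0 < isq R d.
Proof. by move=> d_gt0; rewrite invr_gt0 sqrtr_gt0 ltr0n. Qed.

Lemma div_nat_isq (R : realType) d (c : R) : c / d%:R = c * (isq R d * isq R d).
Proof. by rewrite /isq -invfM -expr2 sqr_sqrtr ?ler0n. Qed.

Lemma near_isq_le (R : realType) (e : R) : 0 < e -> \forall d \near \oo, isq R d <= e.
Proof.
move=> e_gt0; have einv_gt0 : 0 < e^-1 by rewrite invr_gt0.
near=> d.
have d_ge : e^-1 ^+ 2 <= d%:R by near: d; exact: nbhs_infty_ger.
have sqrt_ge : e^-1 <= Num.sqrt d%:R.
  by rewrite -(gtr0_norm einv_gt0) -sqrtr_sqr ler_sqrt.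
by rewrite /isq invf_ple ?posrE // (lt_le_trans einv_gt0).
Unshelve. all: by end_near. Qed.

Lemma near_isq_mul_le (R : realType) (c b : R) : 0 <= c -> 0 < b ->
  \forall d \near \oo, c * isq R d <= b.
Proof.
move=> c_ge0 b_gt0; have c1_gt0 : 0 < c + 1 by lra.
apply: filterS (near_isq_le (divr_gt0 b_gt0 c1_gt0)) => d.
rewrite ler_pdivlMr // => le_b; have := isq_ge0 R d; nra.
Qed.

Lemma tnorm_ge0 (R : realType) d (x : 'I_d -> R) : 0 <= tnorm x.
Proof. exact: sqrtr_ge0. Qed.

Lemma tnorm_Csec0 (R : realType) d (y : 'I_d -> R) : Csec0 y -> tnorm y = 0.
Proof. by move=> y0; rewrite /tnorm big1 ?sqrtr0 // => i /y0 ->; rewrite expr0n. Qed.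

Lemma tdot_Csec0 (R : realType) d (z y : 'I_d -> R) : Csec0 y -> tdot z y = 0.
Proof. by move=> y0; rewrite /tdot big1 // => i /y0 ->; rewrite mulr0. Qed.

Lemma Dpos_plane (R : realType) d (x : 'I_d -> R) : Dpos x ->
  forall i : 'I_d, (val i = 0 \/ val i = 1)%N -> - isq R d < x i < isq R d.
Proof. by move=> x_pos i hi; have /andP[x_gt0 x_lt] := x_pos i hi; apply/andP; split; lra. Qed.

Lemma sum_split_plane (R : realType) d (F : 'I_d -> R) : (2 <= d)%N ->
  exists i0 i1 : 'I_d, [/\ val i0 = 0%N, val i1 = 1%N &
    \sum_(i < d) F i = F i0 + F i1 + \sum_(i < d | (2 <= i)%N) F i].
Proof.
case: d F => [|[|d]] F // _; exists ord0, (lift ord0 ord0); split=> //.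
rewrite (bigD1 ord0) //= (bigD1 (lift ord0 ord0)) //= addrA; congr (_ + _).
by apply: eq_bigl => -[[|[|m]] ?].
Qed.

Lemma edist_sqr_split (R : realType) d (z y : 'I_d -> R) : (2 <= d)%N ->
  exists i0 i1 : 'I_d, [/\ val i0 = 0%N, val i1 = 1%N &
    Defs.edist z y ^+ 2 = (z i0 - y i0) ^+ 2 + (z i1 - y i1) ^+ 2 +
                          (tnorm z ^+ 2 + tnorm y ^+ 2 - 2 * tdot z y)].
Proof.
move=> d_ge2; have [i0 [i1 [h0 h1 split_sum]]] := sum_split_plane (fun i => (z i - y i) ^+ 2) d_ge2.
exists i0, i1; split=> //.
have sqr_ge0 (x : 'I_d -> R) (P : pred 'I_d) : 0 <= \sum_(i < d | P i) x i ^+ 2.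
  by apply: sumr_ge0 => i _; exact: sqr_ge0.
rewrite /Defs.edist /enorm /tnorm !sqr_sqrtr // split_sum; congr (_ + _).
by rewrite /tdot mulr_sumr -big_split -sumrB; apply: eq_bigr => i _ /=; ring.
Qed.

Lemma edist_lt_of_transverse (R : realType) d (z y : 'I_d -> R) (s r : R) :
  (2 <= d)%N -> 0 < r ->
  (forall i : 'I_d, (val i = 0 \/ val i = 1)%N -> -s < z i < s /\ -s < y i < s) ->
  tnorm z ^+ 2 + tnorm y ^+ 2 - 2 * tdot z y <= r ^+ 2 - 8 * (s * s) ->
  Defs.edist z y < r.
Proof.
move=> d_ge2 r_gt0 plane_small transverse_le.
have [i0 [i1 [h0 h1 dist_sqr]]] := edist_sqr_split z y d_ge2.
have [/andP[z0l z0r] /andP[y0l y0r]] := plane_small i0 (or_introl h0).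
have [/andP[z1l z1r] /andP[y1l y1r]] := plane_small i1 (or_intror h1).
have dist_ge0 : 0 <= Defs.edist z y by apply: sqrtr_ge0.
suff : Defs.edist z y ^+ 2 < r ^+ 2 by nra.
rewrite dist_sqr; nra.
Qed.

Lemma sqr_le_first_shell (R : realFieldType) (rho Z w : R) :
  0 <= w <= rho - 1 -> 0 <= Z < 1 + rho - 2 * w -> Z ^+ 2 <= (1 + rho) ^+ 2 - 8 * w.
Proof.
move=> /andP[w_ge0 w_le] /andP[Z_ge0 Z_lt].
have : Z ^+ 2 <= (1 + rho - 2 * w) ^+ 2 by rewrite ler_sqr ?nnegrE; lra.
nra.
Qed.

Lemma law_of_cosines_defect (R : realFieldType) (p q c Y Z w : R) :
  0 <= c <= 1 -> 0 <= Y -> 0 <= Z -> p - 3 * w <= Y <= p -> q - 3 * w <= Z <= q ->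
  Y ^+ 2 + Z ^+ 2 - 2 * c * (Y * Z) <= p ^+ 2 + q ^+ 2 - 2 * c * (p * q) + 6 * (p + q) * w.
Proof.
move=> /andP[c_ge0 c_le1] Y_ge0 Z_ge0 /andP[Y_ge Y_le] /andP[Z_ge Z_le].
have w_ge0 : 0 <= w by lra.
have prod_gap : p * q - Y * Z <= 3 * (p + q) * w.
  have : p * (q - Z) <= p * (3 * w) by apply: ler_wpM2l; lra.
  have : Z * (p - Y) <= q * (3 * w) by apply: ler_pM; lra.
  nra.
have prod_le : Y * Z <= p * q by apply: ler_pM.
have : c * (p * q - Y * Z) <= p * q - Y * Z by nra.
nra.
Qed.

Definition step_scale (R : realFieldType) (p q s : R) : Prop :=
  [/\ 6 * s <= p, 6 * s <= q & 4 * (3 * (p + q) + 4) * s <= p * q].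

Lemma transverse_le_step (R : realFieldType) (p q r a s Y Z D : R) :
  0 < p -> 0 < q -> 0 < r -> 0 <= a <= 1 ->
  q ^+ 2 = p ^+ 2 + 2 * r * a * p + r ^+ 2 ->
  0 < s <= 1 -> step_scale p q s ->
  p - 3 * (s * s) <= Y < p - 2 * (s * s) -> q - 3 * (s * s) <= Z < q - 2 * (s * s) ->
  Y * Z * ((p + a * r) / q + s) <= D ->
  Z ^+ 2 + Y ^+ 2 - 2 * D <= r ^+ 2 - 8 * (s * s).
Proof.
move=> p_gt0 q_gt0 r_gt0 /andP[a_ge0 a_le1] q_sqr /andP[s_gt0 s_le1] [p_ge q_ge pq_ge]
  /andP[Y_ge Y_lt] /andP[Z_ge Z_lt] D_ge.
set w := s * s in Y_ge Y_lt Z_ge Z_lt *.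
have w_ge0 : 0 <= w by rewrite /w mulr_ge0 // ltW.
have w_le : w <= s by rewrite /w ger_pMr.
(* [c] is the cosine of the angle between the sides [p] and [q] of the
   triangle whose third side is [r]. *)
set c := (p + a * r) / q in D_ge.
have num_ge0 : 0 <= p + a * r by nra.
have c_ge0 : 0 <= c by rewrite divr_ge0 // ltW.
have c_le1 : c <= 1.
  rewrite ler_pdivrMr // mul1r -(ler_pXn2r (_ : 0 < 2)%N) ?nnegrE ?(ltW q_gt0) // q_sqr.
  have : (a * r) ^+ 2 <= r ^+ 2 by rewrite ler_sqr ?nnegrE; nra.
  nra.
have r_sqr : r ^+ 2 = p ^+ 2 + q ^+ 2 - 2 * c * (p * q).
  by rewrite /c q_sqr; field; rewrite gt_eqF.
have Y_half : p <= 2 * Y by lra.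
have Z_half : q <= 2 * Z by lra.
have YZ_ge : p * q <= 4 * (Y * Z) by nra.
have defect : Y ^+ 2 + Z ^+ 2 - 2 * c * (Y * Z) <= r ^+ 2 + 6 * (p + q) * w.
  by rewrite r_sqr; apply: law_of_cosines_defect; rewrite ?c_ge0 //; lra.
have YZs_ge : (3 * (p + q) + 4) * w <= Y * Z * s.
  have : 4 * (3 * (p + q) + 4) * s * s <= p * q * s by nra.
  rewrite /w; nra.
rewrite mulrDr in D_ge; nra.
Qed.

Lemma radicand_gt0 (R : realFieldType) (p r a : R) : 0 < p -> 0 <= r -> 0 <= a ->
  0 < p ^+ 2 + 2 * r * a * p + r ^+ 2.
Proof.
move=> p_gt0 r_ge0 a_ge0; have : 0 <= 2 * r * a * p by rewrite !mulr_ge0 // ltW.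
by have := exprn_gt0 2 p_gt0; have := sqr_ge0 r; lra.
Qed.

Section Shells.
Variables (R : realType) (rho : R) (k : nat) (a : nat -> R).
Hypothesis rho_gt1 : 1 < rho.
Hypothesis a_range : forall i : nat, (2 <= i <= k.+1)%N -> 0 < a i < 1.

Lemma rr_gt0 i : 0 < rr rho k i.
Proof. by rewrite /rr; case: ifP => _; have := rho_gt1; lra. Qed.

Lemma rr_last : rr rho k k.+1 = 1 + rho.
Proof. by rewrite /rr eqxx orbT. Qed.

Lemma rr_mid i : (2 <= i <= k)%N -> rr rho k i = 2.
Proof. by case/andP=> i_ge2 i_le; rewrite /rr gtn_eqF // ltn_eqF. Qed.

Lemma ddSS m : dd rho k a m.+2 = Num.sqrt (dd rho k a m.+1 ^+ 2
  + 2 * rr rho k m.+2 * a m.+2 * dd rho k a m.+1 + rr rho k m.+2 ^+ 2).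
Proof. by []. Qed.

Lemma dd_gt0 n : (1 <= n <= k.+1)%N -> 0 < dd rho k a n.
Proof.
elim: n => [//|[_ _|m IH /andP[_ le_mk]]]; first by rewrite /=; have := rho_gt1; lra.
have /andP[a_gt0 _] : 0 < a m.+2 < 1 by apply: a_range; rewrite le_mk.
have p_gt0 : 0 < dd rho k a m.+1 by apply: IH; rewrite (ltnW le_mk).
by rewrite ddSS sqrtr_gt0 radicand_gt0 // ?ltW ?rr_gt0.
Qed.

Lemma dd_sqr n : (2 <= n <= k.+1)%N -> dd rho k a n ^+ 2 =
  dd rho k a n.-1 ^+ 2 + 2 * rr rho k n * a n * dd rho k a n.-1 + rr rho k n ^+ 2.
Proof.
case: n => [|[|m]] // hm; have /andP[a_gt0 _] := a_range hm.
have p_gt0 : 0 < dd rho k a m.+1 by apply: dd_gt0; case/andP: hm => _ /ltnW ->.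
by rewrite ddSS sqr_sqrtr // ltW // radicand_gt0 // ?ltW ?rr_gt0.
Qed.

Lemma dd_lt n : (2 <= n <= k.+1)%N -> dd rho k a n.-1 < dd rho k a n.
Proof.
move=> hn.
have p_gt0 : 0 < dd rho k a n.-1 by apply: dd_gt0; case: n hn => [|[|m]] // /andP[_ /ltnW ->].
have q_gt0 : 0 < dd rho k a n by apply: dd_gt0; case/andP: hn => /ltnW -> ->.
have /andP[a_gt0 _] := a_range hn.
rewrite -(ltr_pXn2r (_ : 0 < 2)%N) ?nnegrE ?ltW // (dd_sqr hn) -addrA ltrDl.
by have := rr_gt0 n => r_gt0; rewrite addr_gt0 ?exprn_gt0 ?mulr_gt0.
Qed.

Lemma dd_le n m : (1 <= n <= m)%N -> (m <= k.+1)%N -> dd rho k a n <= dd rho k a m.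
Proof.
elim: m => [|m IH] /andP[n_ge1 le_nm] m_le; first by case: n n_ge1 le_nm.
move: le_nm; rewrite leq_eqVlt => /orP[/eqP -> //|lt_nm].
have m_ge1 : (1 <= m)%N by apply: leq_trans n_ge1 _; rewrite -ltnS.
have le_m : dd rho k a n <= dd rho k a m by apply: IH; [rewrite n_ge1 -ltnS | exact: ltnW].
by apply: le_trans le_m (ltW (dd_lt (n := m.+1) _)); rewrite ltnS m_ge1.
Qed.

Definition small_scale (s : R) : Prop :=
  [/\ s <= 1, s <= rho - 1 &
   forall i, (2 <= i <= k.+1)%N ->
     step_scale (dd rho k a i.-1) (dd rho k a i) s /\
     s <= dd rho k a i - dd rho k a i.-1].

Lemma near_small_scale : \forall d \near \oo, small_scale (isq R d).
Proof.
have rho1_gt0 : 0 < rho - 1 by have := rho_gt1; lra.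
near=> d; split.
- by near: d; apply: near_isq_le.
- by near: d; apply: near_isq_le.
- near: d; apply: near_forall_range => i hi.
  have p_gt0 : 0 < dd rho k a i.-1.
    by apply: dd_gt0; case: i hi => [|[|m]] // /andP[_ /ltnW ->].
  have q_gt0 : 0 < dd rho k a i by apply: dd_gt0; case/andP: hi => /ltnW -> ->.
  have gap_gt0 : 0 < dd rho k a i - dd rho k a i.-1 by rewrite subr_gt0 dd_lt.
  have coef_ge0 : 0 <= 4 * (3 * (dd rho k a i.-1 + dd rho k a i) + 4).
    by rewrite mulr_ge0 // addr_ge0 // mulr_ge0 // addr_ge0 // ltW.
  near=> d; split; first split.
  + by near: d; apply: near_isq_mul_le.
  + by near: d; apply: near_isq_mul_le.
  + by near: d; apply: near_isq_mul_le; rewrite ?mulr_gt0.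
  + by near: d; apply: near_isq_le.
Unshelve. all: by end_near. Qed.

Lemma Cset_plane i d (x : 'I_d -> R) : Cset rho k a i x ->
  forall j : 'I_d, (val j = 0 \/ val j = 1)%N -> - isq R d < x j < isq R d.
Proof.
rewrite /Cset; case: ifP => _ [x_plane _]; last exact: Dpos_plane.
move=> j [j0|j1]; first by case: (x_plane j) => /(_ j0).
by case: (x_plane j) => _ /(_ j1) /andP[x_gt x_lt0]; apply/andP; split; lra.
Qed.

Lemma Csec_tnorm i d (x : 'I_d -> R) : Csec rho k a i x ->
  dd rho k a i - 3 * (isq R d * isq R d) <= tnorm x < dd rho k a i - 2 * (isq R d * isq R d).
Proof. by rewrite /Csec !div_nat_isq => -[x_lt /negP]; rewrite -leNgt x_lt andbT. Qed.

Lemma Dset_subset_ball d i (y z : 'I_d -> R) : (2 <= d)%N -> small_scale (isq R d) ->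
  (1 <= i <= k.+1)%N -> Cset rho k a i.-1 y -> Dset rho k a i y z ->
  ball_d y (rr rho k i) z /\ Cset rho k a i z.
Proof.
move=> d_ge2 [s_le1 s_le_rho steps] hi y_in [z_pos z_sec].
have s_gt0 : 0 < isq R d by apply: isq_gt0; apply: ltnW.
have z_Csec : Csec rho k a i z by move: z_sec; rewrite /Dsec; case: ifP => [/eqP -> | _ []].
split; last by rewrite /Cset; case: i hi {y_in z_sec} z_Csec.
apply: edist_lt_of_transverse (rr_gt0 i) _ _ => //.
  by move=> j hj; split; [exact: Dpos_plane | exact: Cset_plane y_in j hj].
have /andP[Z_ge Z_lt] := Csec_tnorm z_Csec.
case: i hi y_in z_sec Z_ge Z_lt {z_Csec} => [//|[_ | m hm]] y_in z_sec Z_ge Z_lt.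
- move: y_in => [_ y0]; rewrite (tnorm_Csec0 y0) (tdot_Csec0 z y0) /rr /= expr0n /=.
  rewrite mulr0 !addr0 subr0; apply: sqr_le_first_shell; last by rewrite tnorm_ge0.
  have w_le : isq R d * isq R d <= isq R d by rewrite ger_pMr.
  by rewrite mulr_ge0 ?(ltW s_gt0) //=; lra.
- have {}hm : (2 <= m.+2 <= k.+1)%N := hm.
  have Y_bounds : dd rho k a m.+1 - 3 * (isq R d * isq R d) <= tnorm y <
                  dd rho k a m.+1 - 2 * (isq R d * isq R d).
    by move: y_in => [_ /Csec_tnorm].
  have p_gt0 : 0 < dd rho k a m.+1 by apply: dd_gt0; case/andP: hm => _ /ltnW ->.
  have q_gt0 : 0 < dd rho k a m.+2 by apply: dd_gt0; case/andP: hm => _ ->.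
  have /andP[a_gt0 a_lt1] := a_range hm.
  have [step _] := steps _ hm.
  move: z_sec => [_ D_ge].
  apply: (transverse_le_step p_gt0 q_gt0 (rr_gt0 _) _ (dd_sqr hm) _ step Y_bounds) => //.
  - by rewrite !ltW.
  - by rewrite s_gt0.
  - by apply/andP.
Qed.

Lemma Cset_Wplus i d (x : 'I_d -> R) : (1 <= i)%N -> Cset rho k a i x -> Wplus x.
Proof.
case: i => [//|i] _ [x_pos _] j hj; have /andP[x_gt0 x_lt] := x_pos j hj.
have s_gt0 : 0 < isq R d by lra.
by rewrite mulrC divr_gt0 //= ltr_pdivrMr // mul1r.
Qed.

Lemma Cset_tnorm_lt d i j (x y : 'I_d -> R) : (1 <= d)%N -> small_scale (isq R d) ->
  (1 <= i)%N -> (i < j <= k.+1)%N -> Cset rho k a i x -> Cset rho k a j y ->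
  tnorm x < tnorm y.
Proof.
move=> d_ge1 [s_le1 _ steps] i_ge1 /andP[lt_ij j_le] x_in y_in.
have s_gt0 := isq_gt0 R d_ge1.
have w_le : isq R d * isq R d <= isq R d by rewrite ger_pMr.
have i1_range : (2 <= i.+1 <= k.+1)%N by rewrite ltnS i_ge1 (leq_trans lt_ij j_le).
have [_ gap] := steps _ i1_range.
have := dd_le (n := i.+1) (m := j) lt_ij j_le.
case: i i_ge1 lt_ij x_in gap {i1_range} => [//|i] _ lt_ij [_ x_sec] gap.
case: j lt_ij j_le y_in => [//|j] _ _ [_ y_sec] dd_ij.
have /andP[_ x_lt] := Csec_tnorm x_sec; have /andP[y_ge _] := Csec_tnorm y_sec.
lra.
Qed.

Lemma chain_in_shells d (Y : nat -> 'I_d -> R) : (2 <= d)%N -> small_scale (isq R d) ->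
  Cset rho k a 0 (Y 0%N) ->
  (forall i, (1 <= i <= k.+1)%N -> Dset rho k a i (Y i.-1) (Y i)) ->
  forall i, (1 <= i <= k.+1)%N ->
    Cset rho k a i (Y i) /\ Defs.edist (Y i) (Y i.-1) < rr rho k i.
Proof.
move=> d_ge2 small Y0 YD; elim=> [//|i IH] hi.
have Yi : Cset rho k a i (Y i).
  by case: i IH hi => [//|i] IH /andP[_ /ltnW hi]; case: IH.
by have [] := Dset_subset_ball d_ge2 small hi Yi (YD _ hi).
Qed.

Lemma Gplus_of_chain d (chi1 chirho : set ('I_d -> R)) (Y : nat -> 'I_d -> R) :
  (1 <= k)%N -> (1 <= d)%N -> small_scale (isq R d) ->
  (forall i, (1 <= i <= k)%N -> chi1 (Y i)) -> chirho (Y k.+1) ->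
  (forall i, (1 <= i <= k.+1)%N ->
     Cset rho k a i (Y i) /\ Defs.edist (Y i) (Y i.-1) < rr rho k i) ->
  Gplus rho k chi1 chirho (Y 0%N).
Proof.
move=> k_ge1 d_ge1 small Y_chi1 Y_chirho chain.
have Y_in i : (1 <= i <= k)%N -> Cset rho k a i (Y i).
  by case/andP=> i_ge1 i_le; case: (chain i); rewrite ?i_ge1 ?(leq_trans i_le).
have Y_neq i j : (1 <= i)%N -> (i < j <= k)%N -> Y i <> Y j.
  move=> i_ge1 /andP[lt_ij j_le] eq_ij.
  have j_ge1 : (1 <= j)%N := leq_trans i_ge1 (ltnW lt_ij).
  have i_le : (i <= k)%N := ltnW (leq_trans lt_ij j_le).
  suff : tnorm (Y i) < tnorm (Y j) by rewrite eq_ij ltxx.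
  apply: Cset_tnorm_lt (Y_in i _) (Y_in j _) => //.
  - by rewrite lt_ij (leqW j_le).
  - by rewrite i_ge1.
  - by rewrite j_ge1.
exists Y; split; last split; last split; last split; last split; last split.
- by move=> i hi; split; [exact: Y_chi1 | apply: Cset_Wplus (Y_in i hi); case/andP: hi].
- move=> i j /andP[i_ge1 i_le] /andP[j_ge1 j_le]; case: (ltngtP i j) => // [lt_ij|lt_ji] _.
    by apply: Y_neq; rewrite ?lt_ij.
  by apply/nesym/Y_neq; rewrite ?lt_ji.
- by [].
- by case: (chain k.+1) => [|Yk _]; [rewrite leqnn | exact: Cset_Wplus Yk].
- by case: (chain 1%N) => //; rewrite ltnS.
- move=> i /andP[i_ge1 i_le].
  have i_lt : (i < k)%N by rewrite -(prednK k_ge1) ltnS.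
  case: (chain i.+1) => [|_]; first by rewrite (leq_trans i_lt).
  by rewrite rr_mid // ltnS i_ge1.
- by case: (chain k.+1) => [|_]; rewrite ?leqnn ?rr_last.
Qed.
End Shells.

Theorem lemma2p12 (R : realType) (rho : R) (k : nat) (kappa : R) (a : nat -> R)
  (hrho : 1 < rho) (hk : (1 <= k)%N)
  (hkap : kappac rho k < kappa /\ kappa < 1)
  (ha : forall i : nat, (2 <= i <= k.+1)%N -> 0 < a i < 1)
  (hineq :
     1 < kappa ^+ k.+1 * ((1 + rho) ^+ 2 / (4 * rho)) *
           Num.sqrt (\prod_(2 <= j < k.+2) (1 - a j ^+ 2)) /\
     kappa ^+ k.+1 * ((1 + rho) ^+ 2 / (4 * rho)) *
           Num.sqrt (\prod_(2 <= j < k.+2) (1 - a j ^+ 2))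
       < kappa * (dd rho k a k.+1 / (2 * rho))) :
  (* (i) *)
  (exists d0 : nat, forall d : nat, (3 <= d)%N -> (d0 <= d)%N ->
     forall i : nat, (1 <= i <= k.+1)%N ->
     forall y : 'I_d -> R, Cset rho k a i.-1 y ->
       Dset rho k a i y `<=`
         (ball_d y (rr rho k i) `&` Cset rho k a i)) /\
  (* (ii) *)
  (exists d0 : nat, forall d : nat, (3 <= d)%N -> (d0 <= d)%N ->
     forall (chi1 chirho : set ('I_d -> R)) (x0 : 'I_d -> R), D0 x0 ->
     (exists X : nat -> 'I_d -> R,
        (forall i : nat, (1 <= i <= k)%N -> chi1 (X i)) /\
        chirho (X k.+1) /\
        Dset rho k a 1 x0 (X 1%N) /\
        (forall i : nat, (2 <= i <= k.+1)%N -> Dset rho k a i (X i.-1) (X i))) ->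
     Gplus rho k chi1 chirho x0).
Proof.
(* [hkap] and [hineq] only matter for the probabilistic use of the lemma. *)
have [d0 small] := near_oo_exists (near_small_scale hrho ha).
split; exists d0 => d d_ge3 d_large; have d_ge2 := ltnW d_ge3.
  move=> i hi y y_in z z_in.
  by have [] := Dset_subset_ball hrho ha d_ge2 (small d d_large) hi y_in z_in.
move=> chi1 chirho x0 x0_in [X [X_chi1 [X_chirho [X1_in X_in]]]].
pose Y i := if i is 0 then x0 else X i.
have Y_in i : (1 <= i <= k.+1)%N -> Dset rho k a i (Y i.-1) (Y i).
  by case: i => [//|[|i]] hi; [exact: X1_in | exact: X_in].
apply: (Gplus_of_chain hrho ha (Y := Y) hk (ltnW d_ge2) (small d d_large)) => //.
  by case=> [//|i] /X_chi1.
exact: (chain_in_shells hrho ha (Y := Y) d_ge2 (small d d_large) x0_in Y_in).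
Qed.
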